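(* A CFM process $p$ satisfies DNI if and only if every sequential process $p_i$ in the support $\mathrm{dom}(\mathrm{dec}(p))$ satisfies DNI.
   Context: Fix a finite set of actions $Act = H \cup L \cup \{\tau\}$, where $H$ (high-level actions) and $L$ (low-level actions) are disjoint and $\tau$ is the silent action; $\mu$ ranges over $Act$, $h$ over $H$. Fix a finite set of process constants disjoint from $Act$. CFM terms: guarded $s ::= \mathbf{0} \mid \mu.q \mid s+s$; sequential $q ::= s \mid C$; parallel $p ::= q \mid p \,|\, p$. A CFM process is a term all of whose constants have a defining equation $C \doteq s$ with $s$ guarded. LTS rules: $\mu.p \xrightarrow{\mu} p$; if $p \xrightarrow{\mu} p'$ and $C \doteq p$ then $C \xrightarrow{\mu} p'$; if $p \xrightarrow{\mu} p'$ then $p+q \xrightarrow{\mu} p'$ and $q+p \xrightarrow{\mu} p'$; if $p \xrightarrow{\mu} p'$ then $p\,|\,q \xrightarrow{\mu} p'\,|\,q$ and $q\,|\,p \xrightarrow{\mu} q\,|\,p'$. Reachability is in this LTS. An FSM is $N=(S,A,T)$ with finite places $S$, finite labels $A\ni\tau$, and $T \subseteq S \times A \times (S \cup \{\theta\})$ ($\theta$ the empty multiset). Markings are finite multisets over $S$; a transition $(s,\ell,m)$ is enabled at $m_1$ if $s\in m_1$ and firing gives $m_1 \xrightarrow{\ell} (m_1\ominus s)\oplus m$. Net semantics: places are sequential CFM processes other than $\mathbf{0}$; $\mathrm{dec}(\mathbf{0})=\theta$, $\mathrm{dec}(\mu.p)=\{\mu.p\}$, $\mathrm{dec}(p+p')=\{p+p'\}$,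 $\mathrm{dec}(C)=\{C\}$, $\mathrm{dec}(p\,|\,p')=\mathrm{dec}(p)\oplus\mathrm{dec}(p')$; $\mathrm{dom}(m)$ is the set of places with nonzero multiplicity in $m$. The net $[\![p]\!]$ has initial marking $\mathrm{dec}(p)$, all places and transitions reachable from it, and transitions $(s,\mu,\mathrm{dec}(s'))$ for reachable places $s$ with $s\xrightarrow{\mu}s'$ in the LTS. The net $[\![p\setminus H]\!]$ is obtained by renaming each place $s$ as $s\setminus H$, removing transitions labelled in $H$, and taking initial marking $\mathrm{dec}(p)\setminus H$ (elementwise renaming; similarly $m\setminus H$ for any marking $m$). Branching bisimilarity $\approx$ on places of an FSM: $s\Rightarrow^\epsilon m$ is the reflexive-transitive closure of $\tau$-steps. $R\subseteq S\times S$ is a branching bisimulation if whenever $(s_1,s_2)\in R$ and $s_1\xrightarrow{\ell}m_1$: either $\ell=\tau$ and $\exists m_2$, $s_2\Rightarrow^\epsilon m_2$ with $(s_1,m_2),(m_1,m_2)\in R$; or $\exists s,m_2$ with $s_2\Rightarrow^\epsilon s\xrightarrow{\ell}m_2$, $(s_1,s)\in R$ and either $m_1=\theta=m_2$ or $(m_1,m_2)\in R$; and symmetrically. $\approx$ is the union of all branching bisimulations. The additive closure $R^\oplus$ is the least marking relation with $(\theta,\theta)\in R^\oplus$ and closed under $(s_1,s_2)\in R,(m_1,m_2)\in R^\oplus \Rightarrow (s_1\oplus m_1,s_2\oplus m_2)\in R^\oplus$. Branching team equivalence is $\approx^\oplus$; for processes, $p\approx^\oplus q$ iff $\mathrm{dec}(p)\approx^\oplus\mathrm{dec}(q)$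 in the union of their nets, and $p'\setminus H\approx^\oplus p''\setminus H$ iff $\mathrm{dec}(p')\setminus H\approx^\oplus\mathrm{dec}(p'')\setminus H$ in the union of their restricted nets. DNI: a CFM process $p$ satisfies DNI if for all $p',p''$ reachable from $p$ and $h\in H$ with $p'\xrightarrow{h}p''$, $p'\setminus H\approx^\oplus p''\setminus H$; equivalently, for all markings $m_1,m_2$ reachable from $\mathrm{dec}(p)$ in $[\![p]\!]$ and $h\in H$ with $m_1\xrightarrow{h}m_2$, $m_1\setminus H \approx^\oplus m_2\setminus H$ in $[\![p\setminus H]\!]$. *)

From Stdlib Require Import List Permutation Relations.
Import ListNotations.
Set Implicit Arguments.

(* An FSM: places, labels (with a distinguished silent label), and
   transitions T ⊆ S × A × (S ∪ {θ}); θ is encoded as [None]. *)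
Record FSM := {
  place : Type;
  label : Type;
  ltau  : label;
  trans : place -> label -> option place -> Prop
}.

Section Bisim.
Variable N : FSM.

(* one tau step between "markings" of size <= 1 (option place) *)
Definition tau_step (a b : option (place N)) : Prop :=
  exists s, a = Some s /\ trans N s (ltau N) b.

Definition tau_star (s : place N) (m : option (place N)) : Prop :=
  clos_refl_trans _ tau_step (Some s) m.

Definition Rin (R : place N -> place N -> Prop) (m1 m2 : option (place N)) : Prop :=
  match m1, m2 with Some a, Some b => R a b | _, _ => False end.

Definition bb_simulates (R : place N -> place N -> Prop) : Prop :=
  forall s1 s2 l m1, R s1 s2 -> trans N s1 l m1 ->
    (l = ltau N /\ exists m2, tau_star s2 m2 /\ Rin R (Some s1) m2 /\ Rin R m1 m2)
    \/ (exists s m2, tau_star s2 (Some s) /\ trans N s l m2 /\ R s1 s /\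
          ((m1 = None /\ m2 = None) \/ Rin R m1 m2)).

Definition branching_bisimulation (R : place N -> place N -> Prop) : Prop :=
  bb_simulates R /\ bb_simulates (fun x y => R y x).

Definition bbisim (s1 s2 : place N) : Prop :=
  exists R, branching_bisimulation R /\ R s1 s2.

(* Markings: finite multisets over places, represented by lists
   (taken up to permutation). *)
Definition marking := list (place N).

Inductive add_clos (R : place N -> place N -> Prop) : marking -> marking -> Prop :=
| ac_nil : add_clos R [] []
| ac_cons s1 s2 m1 m2 : R s1 s2 -> add_clos R m1 m2 ->
    add_clos R (s1 :: m1) (s2 :: m2).

Definition add_clos_ms (R : place N -> place N -> Prop) (m1 m2 : marking) : Prop :=
  exists l1 l2, Permutation m1 l1 /\ Permutation m2 l2 /\ add_clos R l1 l2.

Definition team_equiv (m1 m2 : marking) : Prop := add_clos_ms bbisim m1 m2.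

End Bisim.

Section CFM.
Variables (Act K : Type).

Inductive guarded : Type :=
| gNil : guarded
| gPre : Act -> seqp -> guarded
| gSum : guarded -> guarded -> guarded
with seqp : Type :=
| sG : guarded -> seqp
| sC : K -> seqp.

Inductive par : Type :=
| pSeq : seqp -> par
| pPar : par -> par -> par.

(* defining equations C ≐ def C, def C guarded *)
Variable def : K -> guarded.

Inductive gstep : guarded -> Act -> seqp -> Prop :=
| gs_pre mu q : gstep (gPre mu q) mu q
| gs_suml s1 s2 mu q : gstep s1 mu q -> gstep (gSum s1 s2) mu q
| gs_sumr s1 s2 mu q : gstep s2 mu q -> gstep (gSum s1 s2) mu q.

Inductive sstep : seqp -> Act -> seqp -> Prop :=
| ss_g s mu q : gstep s mu q -> sstep (sG s) mu q
| ss_c C mu q : gstep (def C) mu q -> sstep (sC C) mu q.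

Inductive pstep : par -> Act -> par -> Prop :=
| ps_seq q mu q' : sstep q mu q' -> pstep (pSeq q) mu (pSeq q')
| ps_parl p1 p2 mu p1' : pstep p1 mu p1' -> pstep (pPar p1 p2) mu (pPar p1' p2)
| ps_parr p1 p2 mu p2' : pstep p2 mu p2' -> pstep (pPar p1 p2) mu (pPar p1 p2').

Definition reachable (p p' : par) : Prop :=
  clos_refl_trans _ (fun a b => exists mu, pstep a mu b) p p'.

(* dec on sequential terms, as a marking of size <= 1 *)
Definition dec_seq (q : seqp) : option seqp :=
  match q with sG gNil => None | _ => Some q end.

Definition opt_list {X} (o : option X) : list X :=
  match o with Some x => [x] | None => [] end.

Fixpoint dec (p : par) : list seqp :=
  match p with
  | pSeq q => opt_list (dec_seq q)
  | pPar p1 p2 => dec p1 ++ dec p2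
  end.

Definition dom_dec (p : par) (q : seqp) : Prop := In q (dec p).

Variables (tau : Act) (H : Act -> Prop).

(* The restricted net [[ _ \ H ]]: places s \ H (identified with s via the
   renaming), transitions (s\H, mu, dec(s')\H) for s -mu-> s', mu ∉ H. *)
Definition restricted_net : FSM := {|
  place := seqp;
  label := Act;
  ltau := tau;
  trans := fun s mu m => ~ H mu /\ exists s', sstep s mu s' /\ m = dec_seq s'
|}.

Definition restr_team_equiv (p1 p2 : par) : Prop :=
  team_equiv (N := restricted_net) (dec p1) (dec p2).

Definition DNI (p : par) : Prop :=
  forall p1 p2 h, reachable p p1 -> reachable p p2 -> H h -> pstep p1 h p2 ->
    restr_team_equiv p1 p2.

End CFM.

(* A step of a parallel process is a step of one sequential component [q]
   placed in a context, and the context contributes the same places to both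
   sides of the team equivalence to be checked.  Since [≈] is transitive, a
   common multiset of places can be cancelled from [≈^⊕], so the DNI condition
   for a step in context is exactly the DNI condition for the step of [q]
   alone.  It remains to match reachable states: every place of a reachable
   marking descends from a place of [dec p], and every state reachable from a
   place of [dec p] is reachable from [p] with that place in context. *)

From Stdlib Require Import List Permutation Relations.
Import ListNotations.
Set Implicit Arguments.
Unset Strict Implicit.

Arguments tau_star {N}.
Arguments bb_simulates {N}.
Arguments Rin {N}.
Arguments bbisim {N}.

Lemma Permutation_cons_cons_inv {A} (a b : A) l m :
  Permutation (a :: l) (b :: m) ->
  (a = b /\ Permutation l m) \/
  exists k, Permutation l (b :: k) /\ Permutation m (a :: k).
Proof.
  intros HP. destruct (Permutation_vs_cons_inv HP) as [[|c l1] [l2 E]];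
    simpl in E; injection E as -> ->.
  - left. split; [reflexivity|]. exact (Permutation_cons_inv HP).
  - right. exists (l1 ++ l2). split.
    + symmetry. apply Permutation_middle.
    + apply (@Permutation_cons_inv _ _ _ b). rewrite <- HP, perm_swap.
      apply perm_skip. symmetry. apply Permutation_middle.
Qed.

Section BranchingBisimilarity.
Variable N : FSM.
Implicit Types (R S T : place N -> place N -> Prop) (s t : place N).

Lemma tau_star_trans s t m : tau_star s (Some t) -> tau_star t m -> tau_star s m.
Proof. apply rt_trans. Qed.

Lemma tau_star_step s m : trans N s (ltau N) m -> tau_star s m.
Proof. intros Ht. apply rt_step. exists s. auto. Qed.

Lemma bb_simulates_tau_star R s1 s2 s1' :
  bb_simulates R -> R s1 s2 -> tau_star s1 (Some s1') ->
  exists s2', tau_star s2 (Some s2') /\ R s1' s2'.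
Proof.
  intros HR Hr Hs. apply clos_rt_rtn1 in Hs.
  remember (Some s1') as m1 eqn:E. revert s1' E.
  induction Hs as [|y z [s [-> Ht]] _ IH]; intros s1' E.
  - injection E as <-. exists s2. split; [apply rt_refl|exact Hr].
  - subst z. destruct (IH s eq_refl) as [t [Hst Hr']].
    destruct (HR _ _ _ _ Hr' Ht)
      as [[_ [[u|] [Htu [_ Hu]]]] | [u [[v|] [Htu [Huv [_ [[? _]|Hv]]]]]]];
      try contradiction; try discriminate.
    + eauto using tau_star_trans.
    + eauto 6 using tau_star_trans, tau_star_step.
Qed.

(* The first clause of the transfer condition is the semi-branching one,
   which is what makes branching bisimulations closed under composition. *)
Lemma bb_simulates_comp R S T :
  bb_simulates R -> bb_simulates S ->
  (forall x y, T x y <-> exists t, R x t /\ S t y) -> bb_simulates T.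
Proof.
  intros HR HS HT s1 s3 l m1 Hs13 Ht.
  assert (Rin_comp : forall m1 m2 m3, Rin R m1 m2 -> Rin S m2 m3 -> Rin T m1 m3).
  { intros [a|] [b|] [c|]; simpl; try tauto. intros; apply HT; eauto. }
  apply HT in Hs13 as [s2 [Hs12 Hs23]].
  destruct (HR _ _ _ _ Hs12 Ht)
    as [[Hl [[t|] [Ht2 [Ht1 Hm1]]]] | [t [m2 [Ht2 [Htl [Ht1 Hm12]]]]]];
    try contradiction.
  - destruct (bb_simulates_tau_star HS Hs23 Ht2) as [u [Hu3 Htu]].
    left. split; [exact Hl|]. exists (Some u). split; [exact Hu3|].
    split; apply (Rin_comp _ (Some t)); assumption.
  - destruct (bb_simulates_tau_star HS Hs23 Ht2) as [u [Hu3 Htu]].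
    destruct (HS _ _ _ _ Htu Htl)
      as [[Hl [m3 [Hu3' [Htm3 Hm23]]]] | [v [m3 [Hu3' [Hvl [Htv Hm23]]]]]].
    + left. split; [exact Hl|]. exists m3.
      split; [eauto using tau_star_trans|].
      split; [apply (Rin_comp _ (Some t)); assumption|].
      destruct Hm12 as [[-> ->]|Hm12]; [contradiction|eauto].
    + right. exists v, m3. split; [eauto using tau_star_trans|].
      split; [exact Hvl|]. split; [apply HT; eauto|].
      destruct m1, m2, m3; simpl in *; intuition (try discriminate).
      right. eapply (Rin_comp (Some _) (Some _) (Some _)); eauto.
Qed.

Lemma bbisim_refl s : bbisim s s.
Proof.
  assert (Heq : forall R, (forall x y, R x y -> x = y) ->
                          (forall x, R x x) -> bb_simulates R).
  { intros R Hxy Hxx s1 s2 l m1 Hr Ht. apply Hxy in Hr as <-.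
    right. exists s1, m1. split; [apply rt_refl|].
    split; [exact Ht|]. split; [apply Hxx|]. destruct m1; simpl; auto. }
  exists eq. split; [split|reflexivity]; apply Heq; auto.
Qed.

Lemma bbisim_trans s t u : bbisim s t -> bbisim t u -> bbisim s u.
Proof.
  intros [R1 [[A1 B1] H1]] [R2 [[A2 B2] H2]].
  exists (fun x y => exists t, R1 x t /\ R2 t y). repeat split; eauto.
  - apply (bb_simulates_comp A1 A2). tauto.
  - apply (bb_simulates_comp B2 B1). firstorder.
Qed.

End BranchingBisimilarity.

Section AdditiveClosure.
Variable N : FSM.
Implicit Types (R : place N -> place N -> Prop) (m : marking N).

Lemma add_clos_ms_perm R m1 m2 m1' m2' :
  Permutation m1 m1' -> Permutation m2 m2' ->
  add_clos_ms R m1 m2 -> add_clos_ms R m1' m2'.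
Proof.
  intros P1 P2 [l1 [l2 [Q1 [Q2 A]]]]. exists l1, l2.
  split; [rewrite <- P1|split; [rewrite <- P2|]]; assumption.
Qed.

Lemma add_clos_ms_cons R a b m1 m2 :
  R a b -> add_clos_ms R m1 m2 -> add_clos_ms R (a :: m1) (b :: m2).
Proof.
  intros Hab [l1 [l2 [P1 [P2 A]]]].
  exists (a :: l1), (b :: l2). auto using ac_cons.
Qed.

Lemma add_clos_ms_flip R m1 m2 :
  add_clos_ms R m1 m2 -> add_clos_ms (fun x y => R y x) m2 m1.
Proof.
  intros [l1 [l2 [P1 [P2 A]]]]. exists l2, l1. do 2 (split; auto).
  clear P1 P2. induction A; constructor; auto.
Qed.

Lemma add_clos_cons_inv R l1 l2 a m1 :
  add_clos R l1 l2 -> Permutation l1 (a :: m1) ->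
  exists b m2, Permutation l2 (b :: m2) /\ R a b /\ add_clos_ms R m1 m2.
Proof.
  intros A. revert a m1.
  induction A as [|s1 s2 l1 l2 Hr A IH]; intros a m1 HP.
  - destruct (Permutation_nil_cons HP).
  - destruct (Permutation_cons_cons_inv HP) as [[<- P]|[k [P1 P2]]].
    + exists s2, l2. split; [reflexivity|]. split; [exact Hr|].
      exists l1, l2. split; [symmetry; exact P|split; [reflexivity|exact A]].
    + destruct (IH a k P1) as [b [m2 [Q [Hab Hk]]]].
      exists b, (s2 :: m2). split; [rewrite Q; apply perm_swap|].
      split; [exact Hab|].
      apply add_clos_ms_perm with (s1 :: k) (s2 :: m2);
        [symmetry; exact P2|reflexivity|auto using add_clos_ms_cons].
Qed.

Lemma add_clos_ms_cons_inv R a m1 m2 :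
  add_clos_ms R (a :: m1) m2 ->
  exists b m2', Permutation m2 (b :: m2') /\ R a b /\ add_clos_ms R m1 m2'.
Proof.
  intros [l1 [l2 [P1 [P2 A]]]].
  destruct (add_clos_cons_inv A (Permutation_sym P1)) as [b [m2' [Q H]]].
  exists b, m2'. split; [rewrite P2; exact Q|exact H].
Qed.

(* If [a] is paired with [b] and [a] on the right is paired with [c] on the
   left, pairing [c] with [b] frees both copies of [a]. *)
Lemma add_clos_ms_cancel_cons R a m1 m2 :
  (forall x y z, R x y -> R y z -> R x z) ->
  add_clos_ms R (a :: m1) (a :: m2) -> add_clos_ms R m1 m2.
Proof.
  intros Htrans Hms.
  destruct (add_clos_ms_cons_inv Hms) as [b [m2' [P [Hab Hm]]]].
  destruct (Permutation_cons_cons_inv P) as [[<- P']|[k [P1 P2]]].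
  - apply add_clos_ms_perm with m1 m2'; [reflexivity|symmetry; exact P'|exact Hm].
  - assert (Hak : add_clos_ms R m1 (a :: k))
      by (apply add_clos_ms_perm with m1 m2'; [reflexivity|exact P2|exact Hm]).
    destruct (add_clos_ms_cons_inv (add_clos_ms_flip Hak)) as [c [m1' [Q [Hca Hm']]]].
    apply add_clos_ms_flip in Hm'. simpl in Hm'.
    apply add_clos_ms_perm with (c :: m1') (b :: k);
      [symmetry; exact Q|symmetry; exact P1|].
    apply add_clos_ms_cons; eauto.
Qed.

Lemma team_equiv_app_l m m1 m2 :
  team_equiv (m ++ m1) (m ++ m2) <-> team_equiv m1 m2.
Proof.
  induction m as [|a m IH]; simpl; [reflexivity|]. rewrite <- IH. split.
  - apply add_clos_ms_cancel_cons. apply bbisim_trans.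
  - apply add_clos_ms_cons, bbisim_refl.
Qed.

End AdditiveClosure.

Section Contexts.
Variables Act K : Type.
Local Notation par := (par Act K).
Local Notation seqp := (seqp Act K).

Inductive ctx : Type :=
| Hole : ctx
| CtxL : ctx -> par -> ctx
| CtxR : par -> ctx -> ctx.

Fixpoint plug (E : ctx) (q : seqp) : par :=
  match E with
  | Hole => pSeq q
  | CtxL E p => pPar (plug E q) p
  | CtxR p E => pPar p (plug E q)
  end.

Fixpoint ctx_dec (E : ctx) : list seqp :=
  match E with
  | Hole => []
  | CtxL E p => ctx_dec E ++ dec p
  | CtxR p E => dec p ++ ctx_dec E
  end.

Implicit Types (p : par) (q : seqp) (E : ctx).

Lemma dec_plug E q : Permutation (dec (plug E q)) (ctx_dec E ++ dec (pSeq q)).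
Proof.
  induction E as [|E IH p|p E IH]; simpl.
  - reflexivity.
  - rewrite IH, <- !app_assoc. apply Permutation_app_head, Permutation_app_comm.
  - rewrite IH, app_assoc. reflexivity.
Qed.

Lemma in_dec_plug E q x :
  In x (dec (plug E q)) <-> In x (ctx_dec E) \/ In x (dec (pSeq q)).
Proof.
  rewrite <- in_app_iff. split; apply Permutation_in; [|symmetry]; apply dec_plug.
Qed.

Lemma in_dec_pSeq q q' : In q (dec (pSeq q')) -> q = q'.
Proof. destruct q' as [[]|]; simpl; intuition. Qed.

Lemma in_dec_ctx q p : In q (dec p) -> exists E, p = plug E q.
Proof.
  induction p as [q'|p1 IH1 p2 IH2]; simpl; intros Hin.
  - apply in_dec_pSeq in Hin as ->. exists Hole. reflexivity.
  - apply in_app_or in Hin as [Hin|Hin].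
    + destruct (IH1 Hin) as [E ->]. exists (CtxL E p2). reflexivity.
    + destruct (IH2 Hin) as [E ->]. exists (CtxR p1 E). reflexivity.
Qed.

Variable def : K -> guarded Act K.

Lemma reachable_pstep p p1 mu p2 :
  reachable def p p1 -> pstep def p1 mu p2 -> reachable def p p2.
Proof. intros Hr Hst. apply rt_trans with p1; [exact Hr|]. apply rt_step. eauto. Qed.

Lemma dec_pSeq_sstep q mu q' : sstep def q mu q' -> dec (pSeq q) = [q].
Proof.
  intros Hs. destruct q as [[]|]; try reflexivity.
  inversion Hs as [g mu' q'' Hg|]. inversion Hg.
Qed.

Lemma pstep_plug E q mu q' :
  sstep def q mu q' -> pstep def (plug E q) mu (plug E q').
Proof. intros Hs. induction E; simpl; constructor; assumption. Qed.

Lemma pstep_plug_inv p mu p' : pstep def p mu p' ->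
  exists E q q', p = plug E q /\ p' = plug E q' /\ sstep def q mu q'.
Proof.
  induction 1 as [q mu q' Hs|p1 p2 mu p1' _ IH|p1 p2 mu p2' _ IH].
  - exists Hole, q, q'. auto.
  - destruct IH as [E [q [q' [-> [-> Hs]]]]]. exists (CtxL E p2), q, q'. auto.
  - destruct IH as [E [q [q' [-> [-> Hs]]]]]. exists (CtxR p1 E), q, q'. auto.
Qed.

Lemma reachable_pSeq_plug E q p' : reachable def (pSeq q) p' ->
  exists q', p' = pSeq q' /\ reachable def (plug E q) (plug E q').
Proof.
  intros Hr. apply clos_rt_rtn1 in Hr.
  induction Hr as [|p1 p2 [mu Hst] _ IH].
  - exists q. split; [reflexivity|apply rt_refl].
  - destruct IH as [q1 [-> Hr]]. inversion Hst as [? ? q2 Hs| |]; subst.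
    exists q2. split; [reflexivity|].
    apply reachable_pstep with (plug E q1) mu; [exact Hr|apply pstep_plug, Hs].
Qed.

Lemma pstep_dec_origin p mu p' q' : pstep def p mu p' -> In q' (dec p') ->
  In q' (dec p) \/ exists q, In q (dec p) /\ sstep def q mu q'.
Proof.
  intros Hst Hin. destruct (pstep_plug_inv Hst) as [E [q [q0 [-> [-> Hs]]]]].
  apply in_dec_plug in Hin as [Hin|Hin].
  - left. apply in_dec_plug. left. exact Hin.
  - apply in_dec_pSeq in Hin as ->. right. exists q.
    split; [|exact Hs]. apply in_dec_plug. right.
    rewrite (dec_pSeq_sstep Hs). left. reflexivity.
Qed.

Lemma reachable_dec_origin p p' q' : reachable def p p' -> In q' (dec p') ->
  exists q, In q (dec p) /\ reachable def (pSeq q) (pSeq q').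
Proof.
  intros Hr. apply clos_rt_rtn1 in Hr. revert q'.
  induction Hr as [|p1 p2 [mu Hst] _ IH]; intros q' Hin.
  - exists q'. split; [exact Hin|apply rt_refl].
  - destruct (pstep_dec_origin Hst Hin) as [Hin'|[q1 [Hin' Hs]]]; [auto|].
    destruct (IH q1 Hin') as [q [Hq Hr]]. exists q. split; [exact Hq|].
    apply reachable_pstep with (pSeq q1) mu; [exact Hr|constructor; exact Hs].
Qed.

Lemma restr_team_equiv_plug tau H E q q' :
  restr_team_equiv def tau H (plug E q) (plug E q') <->
  restr_team_equiv def tau H (pSeq q) (pSeq q').
Proof.
  unfold restr_team_equiv.
  rewrite <- (team_equiv_app_l (N := restricted_net def tau H) (ctx_dec E)
                (dec (pSeq q)) (dec (pSeq q'))).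
  split; apply add_clos_ms_perm; try apply dec_plug; symmetry; apply dec_plug.
Qed.

End Contexts.

Theorem corollary4p1 (Act K : Type) (tau : Act) (H : Act -> Prop)
  (tau_not_high : ~ H tau)
  (Act_finite : exists l : list Act, forall a : Act, In a l)
  (K_finite : exists l : list K, forall C : K, In C l)
  (def : K -> guarded Act K) (p : par Act K) :
  DNI def tau H p <->
  (forall q : seqp Act K, dom_dec p q -> DNI def tau H (pSeq q)).
Proof.
  split.
  - intros Hp q Hq p1 p2 h Hr1 _ Hh Hst.
    destruct (in_dec_ctx Hq) as [E ->].
    destruct (reachable_pSeq_plug E Hr1) as [q1 [-> Hr1']].
    inversion Hst as [? ? q2 Hs| |]; subst.
    assert (Hst' := pstep_plug E Hs).
    apply (restr_team_equiv_plug def tau H E).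
    exact (Hp _ _ h Hr1' (reachable_pstep Hr1' Hst') Hh Hst').
  - intros Hq p1 p2 h Hr1 _ Hh Hst.
    destruct (pstep_plug_inv Hst) as [E [q1 [q2 [-> [-> Hs]]]]].
    apply restr_team_equiv_plug.
    assert (Hin : In q1 (dec (plug E q1))).
    { apply in_dec_plug. right. rewrite (dec_pSeq_sstep Hs). left. reflexivity. }
    destruct (reachable_dec_origin Hr1 Hin) as [q [Hq0 Hrq]].
    assert (Hst' : pstep def (pSeq q1) h (pSeq q2)) by (constructor; exact Hs).
    exact (Hq q Hq0 _ _ h Hrq (reachable_pstep Hrq Hst') Hh Hst').
Qed.
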